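(* Let $G$ be a graph with adjacency matrix $A$ and positive degrees $d=A\mathbf 1$, let $e=(i,j)$, $i\ne j$, $a_{ij}>0$, be any edge, $v=e_i-e_j$, and $r>0$. Let \[ S_r=(1+r)D-A+\frac{1}{\|d\|_1}dd^T . \] Then $S_r$ is symmetric positive definite, and with $x=S_r^{-1}v$, $\alpha=a_{ij}(x_i-x_j)$, $\beta=a_{ij}x^TDx$, one has $\alpha<1$ and \[ c_r(e)=\frac{\beta}{1-\alpha}. \]
   Context: Graphs are undirected and possibly weighted on vertex set $\{1,\dots,n\}$, with symmetric nonnegative adjacency matrix $A=(a_{k\ell})$; $D=\mathrm{diag}(d)$, $\|d\|_1=\sum_kd_k$, $D^{\pm1/2}=\mathrm{diag}(d_k^{\pm1/2})$; $e_k$ is the $k$-th column of the identity and $\mathbf 1$ the all-ones vector. With $\widehat A=A+a_{ij}vv^T$ (deleting edge $e$ and adding loops of weight $a_{ij}$ at $i$ and $j$; $\widehat A\mathbf 1=d$). For $r>0$ and symmetric nonnegative $B$ with $B\mathbf 1=d$, $K_r(B)=\operatorname{Tr}\Big(\big((1+r)I-D^{-1/2}BD^{-1/2}+\tfrac{1}{\|d\|_1}D^{1/2}\mathbf 1\mathbf 1^TD^{1/2}\big)^{-1}\Big)-(1+r)^{-1}$; the regularized score is $c_r(e)=K_r(\widehat A)-K_r(A)$. *)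

From HB Require Import structures.
From mathcomp Require Import all_boot all_order all_algebra.
Set Implicit Arguments. Unset Strict Implicit. Unset Printing Implicit Defensive.
Import Order.TTheory GRing.Theory Num.Theory.
Local Open Scope ring_scope.

Section Defs.
Variables (R : rcfType) (n : nat).

Definition ones : 'cV[R]_n := const_mx 1.

Definition degv (A : 'M[R]_n) : 'cV[R]_n := A *m ones.

Definition Dmat (d : 'cV[R]_n) : 'M[R]_n := diag_mx d^T.
Definition Dsqrt (d : 'cV[R]_n) : 'M[R]_n := diag_mx (\row_k Num.sqrt (d k 0)).
Definition Dinvsqrt (d : 'cV[R]_n) : 'M[R]_n :=
  diag_mx (\row_k (Num.sqrt (d k 0))^-1).

Definition norm1 (d : 'cV[R]_n) : R := \sum_k d k 0.

Definition evec (k : 'I_n) : 'cV[R]_n := delta_mx k 0.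

Definition vvec (i j : 'I_n) : 'cV[R]_n := evec i - evec j.

Definition Ahat (A : 'M[R]_n) (i j : 'I_n) : 'M[R]_n :=
  A + A i j *: (vvec i j *m (vvec i j)^T).

(* K_r(B), where D, d are those of the graph *)
Definition Kr (d : 'cV[R]_n) (r : R) (B : 'M[R]_n) : R :=
  \tr (invmx ((1 + r)%:M - Dinvsqrt d *m B *m Dinvsqrt d
              + (norm1 d)^-1 *: (Dsqrt d *m ones *m ones^T *m Dsqrt d)))
  - (1 + r)^-1.

Definition cr (r : R) (A : 'M[R]_n) (i j : 'I_n) : R :=
  Kr (degv A) r (Ahat A i j) - Kr (degv A) r A.

Definition Smat (r : R) (A : 'M[R]_n) : 'M[R]_n :=
  (1 + r) *: Dmat (degv A) - A + (norm1 (degv A))^-1 *: (degv A *m (degv A)^T).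

Definition sym_posdef (S : 'M[R]_n) : Prop :=
  S^T = S /\ forall z : 'cV[R]_n, z != 0 -> 0 < (z^T *m S *m z) 0 0.

End Defs.
Arguments evec R {n} k.
Arguments vvec R {n} i j.

From HB Require Import structures.
From mathcomp Require Import all_boot all_order all_algebra.
From mathcomp Require Import ring lra.
Set Implicit Arguments. Unset Strict Implicit. Unset Printing Implicit Defensive.
Import Order.TTheory GRing.Theory Num.Theory.
Local Open Scope ring_scope.

(* With [S(B) := (1+r) D - B + d d^T / ||d||_1], the matrix inverted in [K_r(B)] is
   [D^{-1/2} S(B) D^{-1/2}], so [K_r(B) = tr (S(B)^{-1} D) - 1/(1+r)] whenever [B 1 = d].
   For such symmetric nonnegative [B], [z^T S(B) z >= r z^T D z > 0] because
   [z^T (D - B) z = 1/2 sum_kl B_kl (z_k - z_l)^2].  Deleting [e] keeps the degrees,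
   so [S(Ahat) = S_r - a_ij v v^T], and Sherman-Morrison yields
   [tr (S(Ahat)^{-1} D) - tr (S_r^{-1} D) = a_ij x^T D x / (1 - alpha)]; finally
   [0 < x^T S(Ahat) x = t (1 - alpha)] with [t = v^T x = x^T S_r x > 0] forces [alpha < 1]. *)

Section QuadraticForm.
Variables (R : comPzRingType) (n : nat).
Implicit Types (M N : 'M[R]_n) (u z : 'cV[R]_n).

Definition qf M z : R := (z^T *m M *m z) 0 0.

Lemma qfD M N z : qf (M + N) z = qf M z + qf N z.
Proof. by rewrite /qf mulmxDr mulmxDl mxE. Qed.

Lemma qfN M z : qf (- M) z = - qf M z.
Proof. by rewrite /qf mulmxN mulNmx mxE. Qed.

Lemma qfZ c M z : qf (c *: M) z = c * qf M z.
Proof. by rewrite /qf -scalemxAr -scalemxAl mxE. Qed.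

Lemma qfE M z : qf M z = \sum_k \sum_l z k 0 * M k l * z l 0.
Proof.
rewrite /qf mxE; under eq_bigr do rewrite mxE mulr_suml.
rewrite exchange_big; apply: eq_bigr => k _; apply: eq_bigr => l _.
by rewrite mxE.
Qed.

Lemma qf_diag_mx (d : 'cV[R]_n) z :
  qf (diag_mx d^T) z = \sum_k d k 0 * z k 0 ^+ 2.
Proof.
rewrite /qf mul_mx_diag mxE; apply: eq_bigr => k _.
by rewrite !mxE; ring.
Qed.

Lemma qf_outer u z : qf (u *m u^T) z = ((u^T *m z) 0 0) ^+ 2.
Proof.
have uz : (z^T *m u) 0 0 = (u^T *m z) 0 0 by rewrite -[u in LHS]trmxK -trmx_mul mxE.
by rewrite /qf mulmxA -mulmxA mxE big_ord1 uz expr2.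
Qed.

End QuadraticForm.

Lemma qf_le_diag_rowsum (R : realDomainType) n (B : 'M[R]_n) (d z : 'cV[R]_n) :
  B^T = B -> (forall k l, 0 <= B k l) -> B *m const_mx 1 = d ->
  qf B z <= qf (diag_mx d^T) z.
Proof.
move=> Bsym Bge0 Bd.
have Bswap k l : B l k = B k l by rewrite -[in LHS]Bsym mxE.
have dE k : d k 0 * z k 0 ^+ 2 = \sum_l B k l * z k 0 ^+ 2.
  by rewrite -Bd mxE mulr_suml; apply: eq_bigr => l _; rewrite mxE mulr1.
have mixed : \sum_k \sum_l B k l * z l 0 ^+ 2 = \sum_k \sum_l B k l * z k 0 ^+ 2.
  by rewrite exchange_big; apply: eq_bigr => k _; apply: eq_bigr => l _; rewrite Bswap.
have sq_diff : \sum_k \sum_l B k l * (z k 0 - z l 0) ^+ 2 =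
    2 * (qf (diag_mx d^T) z - qf B z).
  rewrite qf_diag_mx qfE (eq_bigr _ (fun k _ => dE k)).
  rewrite mulrBr mulrDl mul1r -{2}mixed.
  rewrite mulr_sumr -sumrN -!big_split; apply: eq_bigr => k _ /=.
  rewrite mulr_sumr -sumrN -!big_split; apply: eq_bigr => l _ /=.
  ring.
have : 0 <= 2 * (qf (diag_mx d^T) z - qf B z).
  rewrite -sq_diff; apply: sumr_ge0 => k _; apply: sumr_ge0 => l _.
  exact: mulr_ge0 (Bge0 k l) (sqr_ge0 _).
by rewrite pmulr_rge0 // subr_ge0.
Qed.

Lemma mulmx1_invmx (R : comUnitRingType) n (M X : 'M[R]_n) :
  M *m X = 1%:M -> invmx M = X.
Proof.
move=> MX; have [Munit _] := mulmx1_unit MX.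
by rewrite -[invmx M]mulmx1 -MX mulmxA mulVmx // mul1mx.
Qed.

Lemma invmx_rank1_update (F : fieldType) n (S : 'M[F]_n) (u w : 'cV[F]_n) a :
  let t := (w^T *m invmx S *m u) 0 0 in
  S \in unitmx -> 1 - a * t != 0 ->
  invmx (S - a *: (u *m w^T)) =
    invmx S + (a / (1 - a * t)) *: (invmx S *m u *m (w^T *m invmx S)).
Proof.
move=> t Sunit nz; apply: mulmx1_invmx.
have wSu : w^T *m (invmx S *m u) = t%:M by rewrite mulmxA [LHS]mx11_scalar.
have updSu : (S - a *: (u *m w^T)) *m (invmx S *m u) = (1 - a * t) *: u.
  rewrite mulmxBl mulKVmx // -scalemxAl -mulmxA wSu mul_mx_scalar scalerA.
  by rewrite scalerBl scale1r.
rewrite mulmxDr -scalemxAr mulmxA updSu -scalemxAl scalerA.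
rewrite mulmxBl mulmxV // -scalemxAl -mulmxA.
have -> : a / (1 - a * t) * (1 - a * t) = a by field.
by rewrite subrK.
Qed.

Lemma trace_invmx_rank1_downdate (F : fieldType) n (S M : 'M[F]_n) (v : 'cV[F]_n) a :
  let t := (v^T *m invmx S *m v) 0 0 in
  S^T = S -> S \in unitmx -> 1 - a * t != 0 ->
  \tr (invmx (S - a *: (v *m v^T)) *m M) =
    \tr (invmx S *m M) + a / (1 - a * t) * qf M (invmx S *m v).
Proof.
move=> t Ssym Sunit nz; rewrite invmx_rank1_update //.
have vTS : v^T *m invmx S = (invmx S *m v)^T by rewrite trmx_mul trmx_inv Ssym.
have trxxM : \tr (invmx S *m v *m (v^T *m invmx S) *m M) = qf M (invmx S *m v).
  by rewrite vTS -mulmxA mxtrace_mulC trace_mx11.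
by rewrite (@mulmxDl _ n n n) mxtraceD -scalemxAl mxtraceZ trxxM.
Qed.

Lemma posdef_unitmx (R : rcfType) n (S : 'M[R]_n) : sym_posdef S -> S \in unitmx.
Proof.
case=> _ Spos; rewrite unitmxE unitfE; apply/negP => /det0P [w w0 wS].
have wT0 : w^T != 0 by apply: contra w0 => /eqP wT0; rewrite -[w]trmxK wT0 trmx0.
by have := Spos _ wT0; rewrite trmxK wS mul0mx mxE ltxx.
Qed.

Lemma posdef_rank1_downdate_lt1 (R : rcfType) n (S : 'M[R]_n) (v : 'cV[R]_n) a :
  sym_posdef S -> sym_posdef (S - a *: (v *m v^T)) -> v != 0 ->
  a * (v^T *m invmx S *m v) 0 0 < 1.
Proof.
move=> Spd [_ Sdpos] v0; have [Ssym Spos] := Spd.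
set x := invmx S *m v; have Sx : S *m x = v by rewrite mulKVmx ?posdef_unitmx.
have x0 : x != 0 by apply: contra v0 => /eqP x0; rewrite -Sx x0 mulmx0.
have qSx : qf S x = (v^T *m x) 0 0.
  by rewrite /qf -Sx [in RHS]trmx_mul Ssym.
have qSdx : qf (S - a *: (v *m v^T)) x = (v^T *m x) 0 0 - a * (v^T *m x) 0 0 ^+ 2.
  by rewrite qfD qfN qfZ qf_outer qSx.
have := Spos _ x0; have := Sdpos _ x0; rewrite -/(qf _ x) -/(qf _ x) qSdx qSx.
rewrite -mulmxA -/x; nra.
Qed.

Section DiagonalSquareRoots.
Variables (R : rcfType) (n : nat) (d : 'cV[R]_n).
Hypothesis d_gt0 : forall k, 0 < d k 0.

Lemma sqrt_deg_neq0 k : Num.sqrt (d k 0) != 0.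
Proof. by rewrite sqrtr_eq0 -ltNge. Qed.

Lemma mul_Dinvsqrt_Dsqrt : Dinvsqrt d *m Dsqrt d = 1%:M.
Proof.
rewrite mulmx_diag -diag_const_mx; congr diag_mx; apply/rowP => k.
by rewrite !mxE mulVf ?sqrt_deg_neq0.
Qed.

Lemma mul_Dsqrt_Dsqrt : Dsqrt d *m Dsqrt d = Dmat d.
Proof.
rewrite mulmx_diag; congr diag_mx; apply/rowP => k.
by rewrite !mxE -expr2 sqr_sqrtr // ltW.
Qed.

Lemma Dinvsqrt_Dmat_Dinvsqrt : Dinvsqrt d *m Dmat d *m Dinvsqrt d = 1%:M.
Proof.
by rewrite -mul_Dsqrt_Dsqrt mulmxA mul_Dinvsqrt_Dsqrt mul1mx diag_mxC mul_Dinvsqrt_Dsqrt.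
Qed.

Lemma Dsqrt_ones : Dsqrt d *m ones R n = Dinvsqrt d *m d.
Proof.
apply/matrixP => k l; rewrite !mul_diag_mx !mxE (ord1 l) mulr1.
by rewrite -[X in _ = _ * X](sqr_sqrtr (ltW (d_gt0 k))) expr2 mulKf ?sqrt_deg_neq0.
Qed.

Lemma Kr_matrix_conj c N (B : 'M[R]_n) :
  c%:M - Dinvsqrt d *m B *m Dinvsqrt d
    + N *: (Dsqrt d *m ones R n *m (ones R n)^T *m Dsqrt d)
  = Dinvsqrt d *m (c *: Dmat d - B + N *: (d *m d^T)) *m Dinvsqrt d.
Proof.
have outer : Dsqrt d *m ones R n *m (ones R n)^T *m Dsqrt d =
             Dinvsqrt d *m (d *m d^T) *m Dinvsqrt d.
  have onesT : (ones R n)^T *m Dsqrt d = (Dsqrt d *m ones R n)^T.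
    by rewrite trmx_mul tr_diag_mx.
  by rewrite -mulmxA onesT Dsqrt_ones trmx_mul tr_diag_mx !mulmxA.
rewrite outer mulmxDr mulmxDl mulmxBr mulmxBl -!scalemxAr -!scalemxAl.
by rewrite Dinvsqrt_Dmat_Dinvsqrt scalemx1.
Qed.

End DiagonalSquareRoots.

Section RegularizedLaplacian.
Variables (R : rcfType) (n : nat) (d : 'cV[R]_n) (r : R).
Hypothesis d_gt0 : forall k, 0 < d k 0.

Definition Sreg (B : 'M[R]_n) : 'M[R]_n :=
  (1 + r) *: Dmat d - B + (norm1 d)^-1 *: (d *m d^T).

Lemma SregD (B C : 'M[R]_n) : Sreg (B + C) = Sreg B - C.
Proof. by rewrite /Sreg opprD addrA [LHS]addrAC. Qed.

Lemma Kr_Sreg B :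
  Sreg B \in unitmx -> Kr d r B = \tr (invmx (Sreg B) *m Dmat d) - (1 + r)^-1.
Proof.
move=> Sunit; rewrite /Kr (Kr_matrix_conj d_gt0) -/(Sreg B).
have -> : invmx (Dinvsqrt d *m Sreg B *m Dinvsqrt d) =
          Dsqrt d *m invmx (Sreg B) *m Dsqrt d.
  apply: mulmx1_invmx; rewrite !mulmxA -(mulmxA (Dinvsqrt d *m Sreg B)).
  rewrite mul_Dinvsqrt_Dsqrt // mulmx1 -(mulmxA (Dinvsqrt d)) mulmxV // mulmx1.
  exact: mul_Dinvsqrt_Dsqrt.
by rewrite mxtrace_mulC mulmxA mul_Dsqrt_Dsqrt // mxtrace_mulC.
Qed.

Lemma qf_Dmat_gt0 (z : 'cV[R]_n) : z != 0 -> 0 < qf (Dmat d) z.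
Proof.
move=> z0; have summand_ge0 k : 0 <= d k 0 * z k 0 ^+ 2.
  exact: mulr_ge0 (ltW (d_gt0 k)) (sqr_ge0 _).
rewrite qf_diag_mx lt_def sumr_ge0 // andbT.
apply: contra z0 => /eqP /(psumr_eq0P (fun k _ => summand_ge0 k)) sum0.
apply/eqP/matrixP => k l.
move/eqP: (sum0 k isT); rewrite mulf_eq0 gt_eqF // sqrf_eq0 => /eqP zk0.
by rewrite (ord1 l) zk0 mxE.
Qed.

Lemma Sreg_posdef B :
  0 < r -> B^T = B -> (forall k l, 0 <= B k l) -> B *m ones R n = d ->
  sym_posdef (Sreg B).
Proof.
move=> r_gt0 Bsym Bge0 Bd; split.
  by rewrite /Sreg !linearD /= linearN !linearZ /= tr_diag_mx trmx_mul trmxK Bsym.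
move=> z z0; rewrite -/(qf _ z) /Sreg !qfD qfN !qfZ qf_outer.
have Dz_gt0 := qf_Dmat_gt0 z0.
have Bz_le := qf_le_diag_rowsum z Bsym Bge0 Bd.
have rDz_gt0 : 0 < r * qf (Dmat d) z by exact: mulr_gt0.
have outer_ge0 : 0 <= (norm1 d)^-1 * ((d^T *m z) 0 0) ^+ 2.
  by rewrite mulr_ge0 ?sqr_ge0 // invr_ge0 sumr_ge0 // => k _; exact: ltW.
lra.
Qed.

End RegularizedLaplacian.

Section EdgeRemoval.
Variables (R : rcfType) (n : nat) (A : 'M[R]_n) (i j : 'I_n).
Local Notation v := (vvec R i j).

Lemma vvec_trmul (y : 'cV[R]_n) : (v^T *m y) 0 0 = y i 0 - y j 0.
Proof. by rewrite /vvec /evec linearB /= !trmx_delta mulmxBl -!rowE !mxE. Qed.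

Lemma degv_Ahat : degv (Ahat A i j) = degv A.
Proof.
have vones : v^T *m ones R n = 0.
  by apply/matrixP => p q; rewrite !ord1 vvec_trmul !mxE subrr.
by rewrite /degv /Ahat mulmxDl -scalemxAl -mulmxA vones mulmx0 scaler0 addr0.
Qed.

Lemma Ahat_sym : A^T = A -> (Ahat A i j)^T = Ahat A i j.
Proof. by move=> Asym; rewrite /Ahat linearD linearZ /= trmx_mul trmxK Asym. Qed.

Lemma Ahat_ge0 : A^T = A -> (forall k l, 0 <= A k l) ->
  forall k l, 0 <= Ahat A i j k l.
Proof.
move=> Asym Age0 k l; have Aji : A j i = A i j by rewrite -[in LHS]Asym mxE.
rewrite !mxE big_ord1 !mxE.
have := Age0 k l; have := Age0 i j.
case: (eqVneq i j) => [<- | ij]; first by rewrite !subrr mul0r mulr0 addr0.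
have ji : j != i by rewrite eq_sym.
(* The negative entries of [v v^T] sit at [(i, j)] and [(j, i)], where [A] equals [a_ij]. *)
case: (eqVneq k i) => [-> | /negPf ki]; [| case: (eqVneq k j) => [-> | /negPf kj]];
  (case: (eqVneq l i) => [-> | /negPf li]; [| case: (eqVneq l j) => [-> | /negPf lj]]);
  rewrite ?eqxx ?(negPf ij) ?(negPf ji) ?ki ?kj ?li ?lj ?Aji /=; lra.
Qed.

End EdgeRemoval.

Theorem mainTheorem12 (R : rcfType) (n : nat) (A : 'M[R]_n) (i j : 'I_n) (r : R) :
  A^T = A ->
  (forall k l, 0 <= A k l) ->
  (forall k, 0 < degv A k 0) ->
  i != j -> 0 < A i j -> 0 < r ->
  let S := Smat r A in
  let x := invmx S *m (vvec R i j) in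
  let alpha := A i j * (x i 0 - x j 0) in
  let beta := A i j * (x^T *m Dmat (degv A) *m x) 0 0 in
  sym_posdef S /\ alpha < 1 /\ cr r A i j = beta / (1 - alpha).
Proof.
move=> Asym Age0 d_gt0 ij a_gt0 r_gt0 S x alpha beta.
have Spd : sym_posdef S by exact: Sreg_posdef.
have Shat_pd : sym_posdef (Sreg (degv A) r (Ahat A i j)).
  apply: Sreg_posdef => //; [exact: Ahat_sym | exact: Ahat_ge0 | exact: degv_Ahat].
have ShatE : Sreg (degv A) r (Ahat A i j) =
             S - A i j *: (vvec R i j *m (vvec R i j)^T) by exact: SregD.
have v0 : vvec R i j != 0.
  apply/negP => /eqP/matrixP/(_ i 0)/eqP.
  by rewrite !mxE eqxx (negPf ij) subr0 oner_eq0.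
have alphaE : alpha = A i j * ((vvec R i j)^T *m invmx S *m vvec R i j) 0 0.
  by rewrite /alpha -mulmxA vvec_trmul.
have alpha_lt1 : alpha < 1.
  by rewrite alphaE; apply: posdef_rank1_downdate_lt1; rewrite -?ShatE.
have Sunit := posdef_unitmx Spd.
split=> //; split=> //.
rewrite /cr (Kr_Sreg d_gt0 (posdef_unitmx Shat_pd)) (Kr_Sreg d_gt0 Sunit).
have alpha_neq1 : 1 - alpha != 0 by rewrite subr_eq0 gt_eqF.
have nz := alpha_neq1; rewrite alphaE in nz.
rewrite ShatE (trace_invmx_rank1_downdate _ Spd.1 Sunit nz) -alphaE.
rewrite /beta -/(qf _ x); field.
by rewrite alpha_neq1 lt0r_neq0 // addr_gt0.
Qed.
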